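(* For $n=4$ agents, $\hat r_4=r_4=\frac{13}{9}$, whereas $\rho_4\ge\frac{10}{7}$.
   Context: Equal responsibilities; chores $e_1,\ldots,e_m$. A picking order $S\in[n]^m$ allocates $A_i(S)=\{e_r:S_r=i\}$ to agent $i$ (equivalently, agents following greedy in the reversed picking sequence on an identically ordered instance). For additive $c_i\ge0$ with $c_i(e_1)\ge c_i(e_2)\ge\cdots$: $CS_i=\max\{\frac1nc_i(\{e_1,\ldots,e_m\}),c_i(e_1),c_i(e_n)+c_i(e_{n+1})\}$ (zeros beyond $m$) and $MMS_i=\min_{(A_1,\ldots,A_n)}\max_jc_i(A_j)$. $r_{n,m}(S)=\sup_i\sup_{c_i}c_i(A_i(S))/CS_i$, $\rho_{n,m}(S)=\sup_i\sup_{c_i}c_i(A_i(S))/MMS_i$. $r_{n,m}=\min_S r_{n,m}(S)$ and $\rho_{n,m}=\min_S\rho_{n,m}(S)$ over all picking orders of length $m$; $\hat r_{n,m}$ is the minimum of $r_{n,m}(S)$ over ridge picking orders only ($S_r=r$, $S_{n+r}=n-r+1$ for $1\le r\le n$, $m\ge2n$). $r_n=\sup_m r_{n,m}$, $\rho_n=\sup_m\rho_{n,m}$, $\hat r_n=\sup_{m\ge2n}\hat r_{n,m}$. *)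

From HB Require Import structures.
From mathcomp Require Import all_boot all_order all_algebra.
From mathcomp Require Import boolp classical_sets reals.

Set Implicit Arguments.
Unset Strict Implicit.
Unset Printing Implicit Defensive.

Import Order.TTheory GRing.Theory Num.Theory.
Local Open Scope ring_scope.
Local Open Scope classical_set_scope.

(* Agents are 'I_n (agent i+1 of the paper is i), chores are 'I_m
   (chore e_(r+1) of the paper is r).  A picking order S in [n]^m is a
   finite function 'I_m -> 'I_n; it allocates A_i(S) = {r | S r = i}. *)

Section ChoreDivision.
Context (R : realType).

Definition picking_order (n m : nat) := {ffun 'I_m -> 'I_n}.

Definition bundle_cost (n m : nat) (c : 'I_m -> R) (S : 'I_m -> 'I_n)
    (i : 'I_n) : R :=
  \sum_(r < m | S r == i) c r.

Definition valid_cost (m : nat) (c : 'I_m -> R) : Prop :=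
  (forall r, 0 <= c r) /\ (forall r s : 'I_m, (r <= s)%N -> c s <= c r).

Definition cost_ext (m : nat) (c : 'I_m -> R) (k : nat) : R :=
  match (insub k : option 'I_m) with Some r => c r | None => 0 end.

Definition CS (n m : nat) (c : 'I_m -> R) : R :=
  Num.max (Num.max ((\sum_(r < m) c r) / n%:R) (cost_ext c 0))
          (cost_ext c (n - 1) + cost_ext c n).

Definition MMS (n m : nat) (c : 'I_m -> R) : R :=
  inf [set x | exists A : {ffun 'I_m -> 'I_n},
                 x = \big[Num.max/0]_(j < n) bundle_cost c A j].

Definition r_order (n m : nat) (S : picking_order n m) : R :=
  sup [set x | exists (i : 'I_n) (c : 'I_m -> R),
                 [/\ valid_cost c, 0 < CS n c & x = bundle_cost c S i / CS n c]].

Definition rho_order (n m : nat) (S : picking_order n m) : R :=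
  sup [set x | exists (i : 'I_n) (c : 'I_m -> R),
                 [/\ valid_cost c, 0 < MMS n c & x = bundle_cost c S i / MMS n c]].

(* Ridge picking orders: S_r = r and S_(n+r) = n-r+1 for 1 <= r <= n
   (0-based: position p < n gets agent p, position n+q (q<n) gets agent n-1-q). *)
Definition ridge (n m : nat) (S : picking_order n m) : Prop :=
  forall p : 'I_m,
    ((p < n)%N -> nat_of_ord (S p) = nat_of_ord p) /\
    ((n <= p < 2 * n)%N -> nat_of_ord (S p) = (n - 1 - (p - n))%N).

Definition r_nm (n m : nat) : R :=
  inf [set x | exists S : picking_order n m, x = r_order S].
Definition rho_nm (n m : nat) : R :=
  inf [set x | exists S : picking_order n m, x = rho_order S].
Definition rhat_nm (n m : nat) : R :=
  inf [set x | exists S : picking_order n m, ridge S /\ x = r_order S].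

Definition r_n (n : nat) : R := sup [set x | exists m : nat, x = r_nm n m].
Definition rho_n (n : nat) : R := sup [set x | exists m : nat, x = rho_nm n m].
Definition rhat_n (n : nat) : R :=
  sup [set x | exists m : nat, (2 * n <= m)%N /\ x = rhat_nm n m].

End ChoreDivision.

From HB Require Import structures.
From mathcomp Require Import all_boot all_order all_algebra.
From mathcomp Require Import boolp classical_sets reals.
From mathcomp Require Import ring lra zify.
Import Order.TTheory GRing.Theory Num.Theory.

Set Implicit Arguments.
Unset Strict Implicit.
Unset Printing Implicit Defensive.

(* In the picking order [order4] (the ridge 1 2 3 4 4 3 2 1
   followed by a block of 27 picks repeated forever), for every agent i and
   every k, D_i times the number of picks of i among the first k positions is
   at most a_i k + b_i [k >= 1] + g_i ([k >= 4] + [k >= 5]).  Both sides are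
   eventually periodic in k, so this is a finite check.  Abel summation against
   the nonincreasing costs turns it into
     D_i c(A_i) <= a_i c(E) + b_i c(e_1) + g_i (c(e_4) + c(e_5))
               <= (4 a_i + b_i + g_i) CS = 13/9 D_i CS,
   whatever the number m of chores.  For m = 11 (resp. 14) an exhaustive search over prefixes
   shows that every picking order hands all positions of some listed set P to a
   single agent, and each P comes with an integral cost vector (and, for MMS, an
   allocation into four bins) witnessing the ratio 13/9 against CS (resp. 10/7
   against MMS). *)

Definition prefix_sum (f : nat -> nat) (k : nat) : nat :=
  sumn [seq f r | r <- iota 0 k].

Definition window_sum (f : nat -> nat) (k T : nat) : nat :=
  sumn [seq f r | r <- iota k T].

Lemma prefix_sumD f k T : prefix_sum f (k + T) = prefix_sum f k + window_sum f k T.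
Proof. by rewrite /prefix_sum iotaD map_cat sumn_cat. Qed.

Lemma window_sum_periodic f k0 T :
  (forall p, k0 <= p -> f (p + T) = f p) ->
  forall k, k0 <= k -> window_sum f k T = window_sum f k0 T.
Proof.
move=> f_per k /subnKC <-; elim: (k - k0) => [|d IH]; first by rewrite addn0.
have := congr1 (fun s => sumn [seq f r | r <- s]) (iotaD (k0 + d) T 1).
rewrite addn1 /= map_cat sumn_cat /= f_per ?leq_addr // addnS -IH /window_sum.
lia.
Qed.

Lemma prefix_sum_le_periodic (f g : nat -> nat) k0 T : 0 < T ->
  (forall p, k0 <= p -> f (p + T) = f p) ->
  (forall p, k0 <= p -> g (p + T) = g p) ->
  window_sum f k0 T <= window_sum g k0 T ->
  all (fun k => prefix_sum f k <= prefix_sum g k) (iota 0 (k0 + T)) ->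
  forall k, prefix_sum f k <= prefix_sum g k.
Proof.
move=> T_gt0 f_per g_per le_window /allP le_small; elim/ltn_ind => k IH.
have [k_small|k_large] := ltnP k (k0 + T).
  by apply: le_small; rewrite mem_iota.
have -> : k = k - T + T by lia.
have k0_le : k0 <= k - T by lia.
rewrite !prefix_sumD (window_sum_periodic f_per k0_le) (window_sum_periodic g_per k0_le).
by apply: leq_add le_window; apply: IH; lia.
Qed.

Section Summation.
Local Open Scope ring_scope.

Lemma natr_prefix_sum (R : pzSemiRingType) (f : nat -> nat) k :
  (prefix_sum f k)%:R = \sum_(r < k) (f r)%:R :> R.
Proof.
rewrite /prefix_sum -{1}(subn0 k) -/(index_iota 0 k).
by rewrite sumnE big_map natr_sum big_mkord.
Qed.

Lemma abel_summation (R : comRingType) (w c : nat -> R) m :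
  \sum_(r < m) w r * c r =
  \sum_(k < m) (\sum_(r < k.+1) w r) * (c k - c k.+1) + (\sum_(r < m) w r) * c m.
Proof.
elim: m => [|m IH]; first by rewrite !big_ord0 mul0r addr0.
rewrite big_ord_recr IH /= [X in _ = X + _]big_ord_recr /=.
rewrite [\sum_(r < m.+1) w r]big_ord_recr /=.
ring.
Qed.

Lemma ler_sum_nonincr (R : realDomainType) (u v c : nat -> R) m :
  (forall r, 0 <= c r) -> (forall r, c r.+1 <= c r) ->
  (forall k, (k <= m)%N -> \sum_(r < k) u r <= \sum_(r < k) v r) ->
  \sum_(r < m) u r * c r <= \sum_(r < m) v r * c r.
Proof.
move=> c_ge0 c_nonincr dom; rewrite -subr_ge0 -sumrB.
under eq_bigr do rewrite -mulrBl.
have prefix_ge0 k : (k <= m)%N -> 0 <= \sum_(r < k) (v r - u r).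
  by move=> km; rewrite sumrB subr_ge0 dom.
rewrite (abel_summation (fun r => v r - u r)) addr_ge0 ?mulr_ge0 ?prefix_ge0 //.
by apply: sumr_ge0 => k _; rewrite mulr_ge0 ?prefix_ge0 ?subr_ge0.
Qed.

End Summation.

Section Suprema.
Variable R : realType.
Implicit Types (E : set R) (x : R).
Local Open Scope ring_scope.
Local Open Scope classical_set_scope.

Lemma sup_ge0 E : has_ubound E -> (forall x, E x -> 0 <= x) -> 0 <= sup E.
Proof.
move=> ubE E_ge0; have [[x Ex]|/nonemptyPn ->] := pselect (E !=set0).
  exact: le_trans (E_ge0 x Ex) (ub_le_sup ubE Ex).
by rewrite sup0.
Qed.

Lemma ge_sup0 E x : 0 <= x -> ubound E x -> sup E <= x.
Proof.
move=> x_ge0 ubx; have [E_neq0|/nonemptyPn ->] := pselect (E !=set0).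
  exact: ge_sup.
by rewrite sup0.
Qed.

Lemma sup_max E x : E x -> ubound E x -> sup E = x.
Proof.
move=> Ex ubx; apply/eqP; rewrite eq_le ge_sup //=; last by exists x.
by apply: ub_le_sup => //; exists x.
Qed.

End Suprema.

Section Costs.
Variables (R : realType) (n m : nat) (c : 'I_m -> R).
Local Open Scope ring_scope.

Lemma cost_ext_ord (r : 'I_m) : cost_ext c r = c r.
Proof. by rewrite /cost_ext valK. Qed.

Lemma cost_ext_out k : (m <= k)%N -> cost_ext c k = 0.
Proof. by move=> mk; rewrite /cost_ext insubF // ltnNge mk. Qed.

Lemma sum_cost_ext_dirac j :
  \sum_(r < m) (r == j :> nat)%:R * cost_ext c r = cost_ext c j.
Proof.
have [jm|mj] := ltnP j m; last first.
  rewrite cost_ext_out // big1 // => r _.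
  by rewrite ltn_eqF ?mul0r // (leq_trans (ltn_ord r)).
rewrite (bigD1 (Ordinal jm)) //= eqxx mul1r big1 ?addr0 // => r /eqP r_neq.
by case: eqP => [r_eq|]; [case: r_neq; apply: val_inj | rewrite mul0r].
Qed.

Lemma bundle_costE (S : 'I_m -> 'I_n) i :
  bundle_cost c S i = \sum_(r < m) (S r == i)%:R * c r.
Proof.
rewrite /bundle_cost big_mkcond; apply: eq_bigr => r _.
by case: eqP; rewrite ?mul1r ?mul0r.
Qed.

Lemma sum_bundle_cost (A : 'I_m -> 'I_n) :
  \sum_(j < n) bundle_cost c A j = \sum_(r < m) c r.
Proof. by rewrite (partition_big A xpredT). Qed.

Lemma CS_ge :
  [/\ (\sum_(r < m) c r) / n%:R <= CS n c, cost_ext c 0 <= CS n c &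
      cost_ext c (n - 1) + cost_ext c n <= CS n c].
Proof. by rewrite /CS !le_max !lexx !orbT. Qed.

Lemma MMS_le_alloc (A : {ffun 'I_m -> 'I_n}) :
  MMS n c <= \big[Num.max/0]_(j < n) bundle_cost c A j.
Proof.
apply: ge_inf; last by exists A.
by exists 0 => _ [B ->]; apply: bigmax_ge_id.
Qed.

Lemma avg_le_MMS : (0 < n)%N -> (\sum_(r < m) c r) / n%:R <= MMS n c.
Proof.
move=> n_gt0; apply: lb_le_inf; first by exists (\big[Num.max/0]_(j < n)
  bundle_cost c [ffun=> Ordinal n_gt0] j), [ffun=> Ordinal n_gt0].
move=> _ [A ->]; rewrite ler_pdivrMr ?ltr0n // -(sum_bundle_cost A).
set M := \big[Num.max/0]_(j < n) _.
have -> : M * n%:R = \sum_(j < n) M by rewrite sumr_const card_ord mulr_natr.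
by apply: ler_sum => j _; apply: le_bigmax.
Qed.

Hypothesis c_valid : valid_cost c.

Lemma cost_ext_ge0 k : 0 <= cost_ext c k.
Proof. by case: c_valid => c_ge0 _; rewrite /cost_ext; case: insub. Qed.

Lemma cost_ext_nonincr k : cost_ext c k.+1 <= cost_ext c k.
Proof.
have [km|mk] := ltnP k.+1 m; last by rewrite cost_ext_out ?cost_ext_ge0.
have km' := ltnW km.
rewrite -[k.+1]/(nat_of_ord (Ordinal km)) -[k]/(nat_of_ord (Ordinal km')).
by rewrite !cost_ext_ord; case: c_valid => _; apply; rewrite /= leqnSn.
Qed.

Lemma bundle_cost_ge0 (S : 'I_m -> 'I_n) i : 0 <= bundle_cost c S i.
Proof. by case: c_valid => c_ge0 _; apply: sumr_ge0. Qed.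

Lemma bundle_cost_le_sum (S : 'I_m -> 'I_n) i :
  bundle_cost c S i <= \sum_(r < m) c r.
Proof.
case: c_valid => c_ge0 _; rewrite bundle_costE; apply: ler_sum => r _.
by case: eqP; rewrite ?mul1r ?mul0r.
Qed.

Lemma bundle_cost_div_le (S : 'I_m -> 'I_n) i x : (0 < n)%N -> 0 < x ->
  (\sum_(r < m) c r) / n%:R <= x -> bundle_cost c S i / x <= n%:R.
Proof.
move=> n_gt0 x_gt0; rewrite !ler_pdivrMr ?ltr0n // => sum_le.
by rewrite mulrC; apply: le_trans sum_le; apply: bundle_cost_le_sum.
Qed.

End Costs.

Section Ratios.
Variables (R : realType) (n m : nat) (S : picking_order n m).
Hypothesis n_gt0 : (0 < n)%N.
Local Open Scope ring_scope.

Lemma le_r_order i (c : 'I_m -> R) : valid_cost c -> 0 < CS n c ->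
  bundle_cost c S i / CS n c <= r_order R S.
Proof.
move=> c_valid CS_gt0; apply: ub_le_sup; last by exists i, c.
exists n%:R => _ [j [d [d_valid CS_d_gt0 ->]]].
by apply: bundle_cost_div_le => //; case: (CS_ge n d).
Qed.

Lemma r_order_ge0 : 0 <= r_order R S.
Proof.
apply: sup_ge0 => [|_ [j [d [d_valid CS_d_gt0 ->]]]]; last first.
  by rewrite divr_ge0 ?bundle_cost_ge0 ?ltW.
exists n%:R => _ [j [d [d_valid CS_d_gt0 ->]]].
by apply: bundle_cost_div_le => //; case: (CS_ge n d).
Qed.

Lemma le_rho_order i (c : 'I_m -> R) : valid_cost c -> 0 < MMS n c ->
  bundle_cost c S i / MMS n c <= rho_order R S.
Proof.
move=> c_valid MMS_gt0; apply: ub_le_sup; last by exists i, c.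
exists n%:R => _ [j [d [d_valid MMS_d_gt0 ->]]].
exact: bundle_cost_div_le (avg_le_MMS d n_gt0).
Qed.

Lemma rho_order_ge0 : 0 <= rho_order R S.
Proof.
apply: sup_ge0 => [|_ [j [d [d_valid MMS_d_gt0 ->]]]]; last first.
  by rewrite divr_ge0 ?bundle_cost_ge0 ?ltW.
exists n%:R => _ [j [d [d_valid MMS_d_gt0 ->]]].
exact: bundle_cost_div_le (avg_le_MMS d n_gt0).
Qed.

Lemma rho_order_le : rho_order R S <= n%:R.
Proof.
apply: ge_sup0 => // _ [j [d [d_valid MMS_d_gt0 ->]]].
exact: bundle_cost_div_le (avg_le_MMS d n_gt0).
Qed.

End Ratios.

Section CoverSearch.
Variable n : nat.

Definition monochromatic (l P : seq nat) (i : nat) : bool :=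
  all (fun p => (p < size l) && (nth 0 l p == i)) P.

Definition covered (sets : seq (seq nat)) (l : seq nat) : bool :=
  has (fun P => has (monochromatic l P) (iota 0 n)) sets.

(* Written with [if] rather than [||]: [vm_compute] evaluates both arguments of
   [orb], and would explore every extension of an already covered prefix. *)
Fixpoint covered_ext (sets : seq (seq nat)) (d : nat) (l : seq nat) : bool :=
  if covered sets l then true else
  if d is d'.+1 then all (fun a => covered_ext sets d' (rcons l a)) (iota 0 n)
  else false.

Lemma covered_cat sets l t : covered sets l -> covered sets (l ++ t).
Proof.
case/hasP=> P P_in /hasP [i i_lt /allP mono]; apply/hasP; exists P => //.
apply/hasP; exists i => //; apply/allP => p /mono /andP [p_lt /eqP <-].
by rewrite size_cat nth_cat p_lt eqxx ltn_addr.
Qed.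

Lemma covered_extP sets d l : covered_ext sets d l ->
  forall t, size t = d -> all (fun a => a < n) t -> covered sets (l ++ t).
Proof.
elim: d l => [|d IH] l /=; case: ifP => [l_cov _ t _ _|_ //]; try exact: covered_cat.
move=> /allP ext_cov [//|a t] [size_t] /andP [a_lt t_lt].
by rewrite -cat_rcons; apply: IH => //; apply: ext_cov; rewrite mem_iota.
Qed.

Lemma picking_order_covered sets m (S : picking_order n m) :
  covered_ext sets m [::] ->
  exists2 P, P \in sets & exists i, forall r : 'I_m, (r : nat) \in P -> S r = i.
Proof.
move=> search; pose l := [seq nat_of_ord (S r) | r <- enum 'I_m].
have size_l : size l = m by rewrite size_map size_enum_ord.
have l_lt : all (fun a => a < n) l by apply/allP => _ /mapP [r _ ->].
have /hasP [P P_in /hasP [i]] := covered_extP search size_l l_lt.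
rewrite mem_iota add0n => /andP [_ i_lt] /allP mono.
exists P => //; exists (Ordinal i_lt) => r /mono /andP [_ /eqP Sr].
by apply: val_inj; rewrite /= -Sr /l (nth_map r) ?size_enum_ord // nth_ord_enum.
Qed.

End CoverSearch.

Section Certificates.
Variables (n m : nat).

Definition cost_on (P cn : seq nat) : nat :=
  prefix_sum (fun r => (r \in P) * nth 0 cn r) m.

Definition bin_cost (A cn : seq nat) (j : nat) : nat :=
  prefix_sum (fun r => (nth 0 A r == j) * nth 0 cn r) m.

(* [n * CS n c] is [maxn (sumn cn) (n * maxn c_1 (c_n + c_(n+1)))] for the
   cost vector [cn], so the last conjunct says that [p / q <= c(P) / CS n c]. *)
Definition r_certificate (p q : nat) (P cn : seq nat) : bool :=
  [&& size cn == m, sorted geq cn, 0 < sumn cn &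
      p * maxn (sumn cn) (n * maxn (nth 0 cn 0) (nth 0 cn (n - 1) + nth 0 cn n))
        <= q * n * cost_on P cn].

(* [A] puts chore [r] into bin [nth 0 A r]; MMS is at most the costliest bin,
   so the last conjunct gives [p / q <= c(P) / MMS n c]. *)
Definition rho_certificate (p q : nat) (P cn A : seq nat) : bool :=
  [&& size cn == m, sorted geq cn, 0 < cost_on P cn, all (fun a => a < n) A &
      all (fun j => p * bin_cost A cn j <= q * cost_on P cn) (iota 0 n)].

Local Open Scope ring_scope.
Variable R : realType.

Definition nat_cost (cn : seq nat) : 'I_m -> R := fun r => (nth 0%N cn r)%:R.

Lemma nat_cost_valid cn : sorted geq cn -> valid_cost (nat_cost cn).
Proof.
move=> cn_sorted; split=> [r|r s rs]; first exact: ler0n.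
rewrite ler_nat; have [s_lt|s_ge] := ltnP s (size cn); last by rewrite nth_default.
have geq_trans : transitive geq by move=> b a c /= ba cb; apply: leq_trans cb ba.
have r_lt : (r < size cn)%N by apply: leq_ltn_trans rs s_lt.
exact: (sorted_leq_nth geq_trans leqnn 0 cn_sorted r s r_lt s_lt rs).
Qed.

Lemma nat_cost_ext cn k : size cn = m -> cost_ext (nat_cost cn) k = (nth 0%N cn k)%:R.
Proof.
move=> size_cn; have [km|mk] := ltnP k m.
  by rewrite -[k]/(nat_of_ord (Ordinal km)) cost_ext_ord.
by rewrite cost_ext_out // nth_default // size_cn.
Qed.

Lemma sum_nat_cost cn : size cn = m -> \sum_(r < m) nat_cost cn r = (sumn cn)%:R.
Proof.
move=> size_cn; have -> : sumn cn = prefix_sum (nth 0%N cn) m.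
  by rewrite /prefix_sum -size_cn -/(mkseq _ _) mkseq_nth.
by rewrite natr_prefix_sum.
Qed.

Lemma cost_on_le_bundle (S : 'I_m -> 'I_n) P cn i :
  (forall r : 'I_m, (r : nat) \in P -> S r = i) ->
  (cost_on P cn)%:R <= bundle_cost (nat_cost cn) S i.
Proof.
move=> S_P; rewrite bundle_costE natr_prefix_sum; apply: ler_sum => r _.
rewrite natrM /nat_cost; case: (boolP ((r : nat) \in P)) => [/S_P ->|_].
  by rewrite eqxx.
by rewrite mul0r mulr_ge0.
Qed.

Lemma r_certificate_sound p q P cn (S : picking_order n m) i :
  (0 < n)%N -> (0 < q)%N -> r_certificate p q P cn ->
  (forall r : 'I_m, (r : nat) \in P -> S r = i) ->
  p%:R / q%:R <= r_order R S.
Proof.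
move=> n_gt0 q_gt0 /and4P [/eqP size_cn cn_sorted sum_gt0 cert] S_P.
set c := nat_cost cn; have c_valid : valid_cost c := nat_cost_valid cn_sorted.
set X := maxn _ _ in cert.
have CS_le : CS n c <= X%:R / n%:R.
  rewrite /CS /c sum_nat_cost // !nat_cost_ext // !ge_max.
  rewrite ler_wpM2r ?invr_ge0 ?ler0n ?ler_nat ?leq_maxl //=.
  rewrite !ler_pdivlMr ?ltr0n // -!natrD -!natrM !ler_nat !(mulnC _ n).
  by rewrite !(leq_trans _ (leq_maxr _ _)) // leq_mul2l (leq_maxl, leq_maxr) orbT.
have CS_gt0 : 0 < CS n c.
  have [avg_le _ _] := CS_ge n c.
  by apply: lt_le_trans avg_le; rewrite sum_nat_cost // divr_gt0 ?ltr0n.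
apply: le_trans (le_r_order S n_gt0 i c_valid CS_gt0).
rewrite ler_pdivrMr ?ltr0n // mulrAC ler_pdivlMr // mulrC.
apply: le_trans (ler_wpM2r (ler0n _ p) CS_le) _.
apply: le_trans (ler_wpM2r (ler0n _ q) (cost_on_le_bundle cn S_P)).
rewrite mulrAC -natrM ler_pdivrMr ?ltr0n // -!natrM ler_nat; lia.
Qed.

Lemma bundle_cost_bins A cn (i j : 'I_n) : all (fun a => (a < n)%N) A ->
  bundle_cost (nat_cost cn) [ffun r : 'I_m => insubd i (nth 0%N A r)] j =
  (bin_cost A cn j)%:R.
Proof.
move=> A_lt; rewrite bundle_costE natr_prefix_sum; apply: eq_bigr => r _.
have Ar_lt : (nth 0%N A r < n)%N.
  have [r_lt|r_ge] := ltnP r (size A); first by apply: (allP A_lt); rewrite mem_nth.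
  by rewrite nth_default // (leq_ltn_trans (leq0n i)).
by rewrite ffunE natrM -val_eqE insubdK.
Qed.

Lemma rho_certificate_sound p q P cn A (S : picking_order n m) i :
  (0 < p)%N -> (0 < q)%N -> rho_certificate p q P cn A ->
  (forall r : 'I_m, (r : nat) \in P -> S r = i) ->
  p%:R / q%:R <= rho_order R S.
Proof.
move=> p_gt0 q_gt0 /and5P [/eqP size_cn cn_sorted on_gt0 A_lt /allP bins] S_P.
have n_gt0 : (0 < n)%N := leq_ltn_trans (leq0n i) (ltn_ord i).
set c := nat_cost cn; have c_valid : valid_cost c := nat_cost_valid cn_sorted.
have bundle_ge := cost_on_le_bundle cn S_P.
have MMS_le : p%:R * MMS n c <= q%:R * (cost_on P cn)%:R.
  rewrite mulrC -ler_pdivlMr ?ltr0n //.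
  apply: le_trans (MMS_le_alloc c [ffun r : 'I_m => insubd i (nth 0%N A r)]) _.
  apply: bigmax_le => [|j _]; first by rewrite divr_ge0 ?mulr_ge0.
  rewrite bundle_cost_bins // ler_pdivlMr ?ltr0n // mulrC -!natrM ler_nat.
  by apply: bins; rewrite mem_iota add0n ltn_ord.
have MMS_gt0 : 0 < MMS n c.
  apply: lt_le_trans (avg_le_MMS c n_gt0); rewrite divr_gt0 ?ltr0n //.
  apply: lt_le_trans (bundle_cost_le_sum c_valid S i).
  by apply: lt_le_trans bundle_ge; rewrite ltr0n.
apply: le_trans (le_rho_order S n_gt0 i c_valid MMS_gt0).
rewrite ler_pdivrMr ?ltr0n // mulrAC ler_pdivlMr //.
by apply: le_trans MMS_le _; rewrite mulrC ler_wpM2r.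
Qed.

Lemma r_order_ge_certified p q (certs : seq (seq nat * seq nat))
    (S : picking_order n m) :
  (0 < n)%N -> (0 < q)%N -> all (fun x => r_certificate p q x.1 x.2) certs ->
  covered_ext n (map fst certs) m [::] -> p%:R / q%:R <= r_order R S.
Proof.
move=> n_gt0 q_gt0 /allP certs_ok search.
have [_ /mapP [[P cn] cert_in ->] [i S_P]] := picking_order_covered S search.
exact: r_certificate_sound n_gt0 q_gt0 (certs_ok _ cert_in) S_P.
Qed.

Lemma rho_order_ge_certified p q (certs : seq (seq nat * seq nat * seq nat))
    (S : picking_order n m) :
  (0 < p)%N -> (0 < q)%N ->
  all (fun x => rho_certificate p q x.1.1 x.1.2 x.2) certs ->
  covered_ext n [seq x.1.1 | x <- certs] m [::] -> p%:R / q%:R <= rho_order R S.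
Proof.
move=> p_gt0 q_gt0 /allP certs_ok search.
have [_ /mapP [[[P cn] A] cert_in ->] [i S_P]] := picking_order_covered S search.
exact: rho_certificate_sound p_gt0 q_gt0 (certs_ok _ cert_in) S_P.
Qed.

End Certificates.

Definition picker4 (p : nat) : nat :=
  if p < 8 then nth 0 [:: 0; 1; 2; 3; 3; 2; 1; 0] p
  else nth 0 [:: 3; 2; 1; 3; 2; 2; 0; 1; 3; 2; 3; 1; 2; 3;
                 0; 2; 1; 3; 2; 0; 1; 3; 2; 3; 2; 1; 0] ((p - 8) %% 27).

Lemma picker4_lt p : picker4 p < 4.
Proof.
have nth_lt s k : all (fun a => a < 4) s -> nth 0 s k < 4.
  move=> /(all_nthP 0) s_lt; have [/s_lt //|k_ge] := ltnP k (size s).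
  by rewrite nth_default.
by rewrite /picker4; case: ifP => _; apply: nth_lt.
Qed.

Lemma picker4_periodic p : 8 <= p -> picker4 (p + 27) = picker4 p.
Proof.
move=> p_ge; rewrite /picker4 (leq_gtF p_ge) (leq_gtF (leq_trans p_ge (leq_addr _ _))).
by rewrite -addnBAC // modnDr.
Qed.

(* The coefficients D_i, a_i, b_i, g_i; note that 9 (4 a_i + b_i + g_i) = 13 D_i. *)
Definition bundle_coef4 i := nth 0 [:: 27; 9; 36; 27] i.
Definition total_coef4 i := nth 0 [:: 4; 2; 13; 8] i.
Definition first_coef4 i := nth 0 [:: 23; 5; 0; 0] i.
Definition pair_coef4 i := nth 0 [:: 0; 0; 0; 7] i.

Definition weight4 i r :=
  total_coef4 i + first_coef4 i * (r == 0) + pair_coef4 i * ((r == 3) + (r == 4)).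

Lemma picker4_dominated i k : i < 4 ->
  prefix_sum (fun p => bundle_coef4 i * (picker4 p == i)) k <= prefix_sum (weight4 i) k.
Proof.
move=> i_lt; apply: (@prefix_sum_le_periodic _ _ 8 27) => // [p p_ge|p p_ge||].
- by rewrite picker4_periodic.
- by rewrite /weight4; lia.
- by case: i i_lt => [|[|[|[|//]]]] _; vm_compute.
- by case: i i_lt => [|[|[|[|//]]]] _; vm_compute.
Qed.

Section Order4.
Variable R : realType.
Local Open Scope ring_scope.

Definition order4 m : picking_order 4 m := [ffun r : 'I_m => inord (picker4 r)].

Lemma order4E m (r : 'I_m) : order4 m r = picker4 r :> nat.
Proof. by rewrite ffunE inordK // picker4_lt. Qed.

Lemma ridge_order4 m : ridge (order4 m).
Proof.
move=> p; rewrite order4E /picker4; split=> [p_lt|/andP [p_ge p_lt]].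
  by rewrite (ltn_trans p_lt); move: p_lt; case: (nat_of_ord p) => [|[|[|[|]]]].
rewrite p_lt; move: p_ge p_lt.
by case: (nat_of_ord p) => [|[|[|[|[|[|[|[|]]]]]]]].
Qed.

Lemma bundle_order4_le m (c : 'I_m -> R) (i : 'I_4) : valid_cost c ->
  (bundle_coef4 i)%:R * bundle_cost c (order4 m) i <=
  (total_coef4 i)%:R * \sum_(r < m) c r + (first_coef4 i)%:R * cost_ext c 0
  + (pair_coef4 i)%:R * (cost_ext c 3 + cost_ext c 4).
Proof.
move=> c_valid.
have dom k : (k <= m)%N ->
    \sum_(r < k) (bundle_coef4 i * (picker4 r == i))%:R
    <= \sum_(r < k) (weight4 i r)%:R :> R.
  move=> _; rewrite -(natr_prefix_sum R (weight4 i)).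
  rewrite -(natr_prefix_sum R (fun p => bundle_coef4 i * (picker4 p == i))).
  by rewrite ler_nat picker4_dominated.
have := ler_sum_nonincr (u := fun r => (bundle_coef4 i * (picker4 r == i))%:R)
  (v := fun r => (weight4 i r)%:R) (cost_ext_ge0 c_valid) (cost_ext_nonincr c_valid) dom.
have -> : \sum_(r < m) (bundle_coef4 i * (picker4 r == i))%:R * cost_ext c r =
          (bundle_coef4 i)%:R * bundle_cost c (order4 m) i.
  rewrite bundle_costE mulr_sumr; apply: eq_bigr => r _.
  by rewrite cost_ext_ord natrM -mulrA -order4E.
under eq_bigr do rewrite /weight4 !natrD !natrM natrD mulrDr !mulrDl -!mulrA.
rewrite !big_split -!mulr_sumr !sum_cost_ext_dirac /=.
have -> : \sum_(r < m) cost_ext c r = \sum_(r < m) c r.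
  by apply: eq_bigr => r _; rewrite cost_ext_ord.
by rewrite mulrDr.
Qed.

Lemma order4_ratio m (c : 'I_m -> R) (i : 'I_4) : valid_cost c -> 0 < CS 4 c ->
  bundle_cost c (order4 m) i / CS 4 c <= 13 / 9.
Proof.
move=> c_valid CS_gt0; have bound := bundle_order4_le i c_valid.
have [avg_le first_le] := CS_ge 4 c; rewrite subn1 /= => pair_le.
have sum_le : \sum_(r < m) c r <= 4%:R * CS 4 c by rewrite mulrC -ler_pdivrMr.
rewrite ler_pdivrMr // mulrAC ler_pdivlMr //.
rewrite /bundle_coef4 /total_coef4 /first_coef4 /pair_coef4 in bound.
by case: i bound => [[|[|[|[|//]]]] i_lt] /=; lra.
Qed.

Lemma r_order4_le m : r_order R (order4 m) <= 13 / 9.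
Proof.
apply: ge_sup0 => [|_ [i [c [c_valid CS_gt0 ->]]]]; first by rewrite divr_ge0 ?ler0n.
exact: order4_ratio.
Qed.

End Order4.

Definition r_certificates4 : seq (seq nat * seq nat) := [::
  ([:: 0; 1], [:: 1; 1; 0; 0; 0; 0; 0; 0; 0; 0; 0]);
  ([:: 0; 2], [:: 1; 1; 1; 0; 0; 0; 0; 0; 0; 0; 0]);
  ([:: 1; 2], [:: 1; 1; 1; 0; 0; 0; 0; 0; 0; 0; 0]);
  ([:: 0; 3], [:: 1; 1; 1; 1; 0; 0; 0; 0; 0; 0; 0]);
  ([:: 1; 3], [:: 1; 1; 1; 1; 0; 0; 0; 0; 0; 0; 0]);
  ([:: 2; 3], [:: 1; 1; 1; 1; 0; 0; 0; 0; 0; 0; 0]);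
  ([:: 0; 4], [:: 2; 1; 1; 1; 1; 0; 0; 0; 0; 0; 0]);
  ([:: 1; 4], [:: 2; 2; 1; 1; 1; 0; 0; 0; 0; 0; 0]);
  ([:: 2; 4], [:: 2; 2; 2; 1; 1; 0; 0; 0; 0; 0; 0]);
  ([:: 0; 5], [:: 2; 1; 1; 1; 1; 1; 0; 0; 0; 0; 0]);
  ([:: 1; 5], [:: 2; 2; 1; 1; 1; 1; 0; 0; 0; 0; 0]);
  ([:: 3; 4; 5], [:: 1; 1; 1; 1; 1; 1; 0; 0; 0; 0; 0]);
  ([:: 0; 6], [:: 2; 1; 1; 1; 1; 1; 1; 0; 0; 0; 0]);
  ([:: 2; 5; 6], [:: 1; 1; 1; 1; 1; 1; 1; 0; 0; 0; 0]);
  ([:: 3; 4; 6], [:: 1; 1; 1; 1; 1; 1; 1; 0; 0; 0; 0]);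
  ([:: 1; 6; 7], [:: 1; 1; 1; 1; 1; 1; 1; 1; 0; 0; 0]);
  ([:: 2; 5; 7], [:: 1; 1; 1; 1; 1; 1; 1; 1; 0; 0; 0]);
  ([:: 3; 4; 7], [:: 1; 1; 1; 1; 1; 1; 1; 1; 0; 0; 0]);
  ([:: 0; 7; 8], [:: 2; 1; 1; 1; 1; 1; 1; 1; 1; 0; 0]);
  ([:: 1; 6; 8], [:: 2; 2; 1; 1; 1; 1; 1; 1; 1; 0; 0]);
  ([:: 0; 7; 9], [:: 2; 1; 1; 1; 1; 1; 1; 1; 1; 1; 0]);
  ([:: 1; 6; 9], [:: 4; 4; 1; 1; 1; 1; 1; 1; 1; 1; 0]);
  ([:: 2; 5; 8; 9], [:: 1; 1; 1; 1; 1; 1; 1; 1; 1; 1; 0]);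
  ([:: 3; 4; 8; 9], [:: 1; 1; 1; 1; 1; 1; 1; 1; 1; 1; 0]);
  ([:: 0; 7; 10], [:: 3; 1; 1; 1; 1; 1; 1; 1; 1; 1; 1]);
  ([:: 1; 6; 10], [:: 9; 9; 2; 2; 2; 2; 2; 2; 2; 2; 2]);
  ([:: 2; 5; 8; 10], [:: 1; 1; 1; 1; 1; 1; 1; 1; 1; 1; 1]);
  ([:: 2; 5; 9; 10], [:: 1; 1; 1; 1; 1; 1; 1; 1; 1; 1; 1]);
  ([:: 3; 4; 8; 10], [:: 1; 1; 1; 1; 1; 1; 1; 1; 1; 1; 1]);
  ([:: 3; 4; 9; 10], [:: 1; 1; 1; 1; 1; 1; 1; 1; 1; 1; 1])].

Definition rho_certificates4 : seq (seq nat * seq nat * seq nat) := [::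
  ([:: 2; 5; 9; 10; 11], [:: 9; 9; 9; 9; 9; 9; 9; 9; 9; 9; 9; 9; 0; 0],
   [:: 0; 0; 0; 1; 1; 1; 2; 2; 2; 3; 3; 3; 0; 0]);
  ([:: 0; 7; 9], [:: 9; 9; 3; 3; 2; 2; 2; 2; 2; 2; 0; 0; 0; 0],
   [:: 0; 1; 2; 3; 2; 2; 2; 3; 3; 3; 0; 0; 0; 0]);
  ([:: 3; 4; 8; 11; 12], [:: 9; 9; 9; 9; 9; 9; 9; 9; 9; 9; 6; 6; 6; 0],
   [:: 0; 0; 0; 1; 1; 1; 2; 2; 2; 3; 3; 3; 3; 0]);
  ([:: 3; 4; 8; 11; 13], [:: 9; 9; 9; 9; 9; 6; 6; 6; 6; 5; 5; 5; 4; 4],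
   [:: 0; 0; 1; 1; 2; 2; 3; 3; 3; 0; 1; 3; 2; 2]);
  ([:: 3; 4; 8; 12; 13], [:: 9; 9; 9; 9; 9; 6; 6; 6; 6; 3; 3; 3; 3; 3],
   [:: 0; 0; 1; 1; 2; 2; 2; 3; 3; 0; 1; 3; 3; 3]);
  ([:: 1; 6; 8], [:: 9; 9; 5; 3; 2; 2; 2; 2; 2; 0; 0; 0; 0; 0],
   [:: 0; 1; 2; 3; 2; 2; 3; 3; 3; 0; 0; 0; 0; 0]);
  ([:: 1; 5], [:: 9; 9; 5; 5; 4; 4; 0; 0; 0; 0; 0; 0; 0; 0],
   [:: 0; 1; 2; 3; 2; 3; 0; 0; 0; 0; 0; 0; 0; 0]);
  ([:: 1; 6; 7], [:: 9; 9; 9; 9; 9; 9; 9; 9; 0; 0; 0; 0; 0; 0],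
   [:: 0; 0; 1; 1; 2; 2; 3; 3; 0; 0; 0; 0; 0; 0]);
  ([:: 0; 7; 12], [:: 9; 4; 3; 3; 3; 3; 3; 3; 1; 1; 1; 1; 1; 0],
   [:: 0; 1; 1; 2; 2; 2; 3; 3; 1; 1; 3; 3; 3; 0]);
  ([:: 0; 3], [:: 9; 9; 9; 9; 0; 0; 0; 0; 0; 0; 0; 0; 0; 0],
   [:: 0; 1; 2; 3; 0; 0; 0; 0; 0; 0; 0; 0; 0; 0]);
  ([:: 1; 3], [:: 9; 9; 9; 9; 0; 0; 0; 0; 0; 0; 0; 0; 0; 0],
   [:: 0; 1; 2; 3; 0; 0; 0; 0; 0; 0; 0; 0; 0; 0]);
  ([:: 1; 6; 10], [:: 7; 7; 2; 2; 2; 2; 2; 1; 1; 1; 1; 0; 0; 0],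
   [:: 0; 1; 2; 2; 2; 3; 3; 2; 3; 3; 3; 0; 0; 0]);
  ([:: 3; 4; 9; 11; 12], [:: 9; 9; 9; 9; 9; 9; 9; 9; 9; 9; 6; 6; 6; 0],
   [:: 0; 0; 0; 1; 1; 1; 2; 2; 2; 3; 3; 3; 3; 0]);
  ([:: 3; 4; 9; 11; 13], [:: 9; 9; 9; 9; 9; 5; 3; 3; 3; 3; 3; 3; 2; 2],
   [:: 0; 0; 1; 1; 2; 2; 3; 3; 3; 3; 3; 3; 2; 2]);
  ([:: 3; 4; 9; 12; 13], [:: 9; 9; 9; 9; 9; 4; 4; 4; 4; 4; 4; 4; 4; 4],
   [:: 0; 0; 1; 2; 3; 1; 1; 1; 2; 2; 2; 3; 3; 3]);
  ([:: 2; 5; 8; 10; 12], [:: 9; 9; 9; 9; 9; 9; 9; 9; 9; 9; 9; 6; 4; 0],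
   [:: 0; 0; 0; 1; 1; 1; 2; 2; 2; 3; 3; 3; 3; 0]);
  ([:: 0; 7; 10], [:: 9; 7; 3; 3; 2; 2; 2; 2; 2; 2; 2; 0; 0; 0],
   [:: 0; 1; 2; 3; 1; 2; 2; 2; 3; 3; 3; 0; 0; 0]);
  ([:: 2; 5; 7], [:: 9; 9; 9; 9; 9; 9; 9; 9; 0; 0; 0; 0; 0; 0],
   [:: 0; 0; 1; 1; 2; 2; 3; 3; 0; 0; 0; 0; 0; 0]);
  ([:: 0; 7; 11], [:: 9; 5; 3; 3; 3; 3; 3; 3; 1; 1; 1; 1; 0; 0],
   [:: 0; 1; 1; 2; 2; 2; 3; 3; 1; 3; 3; 3; 0; 0]);
  ([:: 2; 5; 6], [:: 9; 9; 9; 9; 9; 9; 9; 0; 0; 0; 0; 0; 0; 0],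
   [:: 0; 0; 1; 1; 2; 2; 3; 0; 0; 0; 0; 0; 0; 0]);
  ([:: 1; 6; 9], [:: 9; 9; 3; 3; 3; 3; 3; 1; 1; 1; 0; 0; 0; 0],
   [:: 0; 1; 2; 2; 2; 3; 3; 3; 3; 3; 0; 0; 0; 0]);
  ([:: 2; 5; 8; 9], [:: 9; 9; 9; 9; 9; 9; 6; 6; 6; 6; 0; 0; 0; 0],
   [:: 0; 0; 1; 1; 2; 3; 2; 2; 3; 3; 0; 0; 0; 0]);
  ([:: 1; 2], [:: 9; 9; 9; 0; 0; 0; 0; 0; 0; 0; 0; 0; 0; 0],
   [:: 0; 1; 2; 0; 0; 0; 0; 0; 0; 0; 0; 0; 0; 0]);
  ([:: 1; 6; 12; 13], [:: 9; 9; 3; 2; 2; 2; 2; 1; 1; 1; 1; 1; 1; 1],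
   [:: 0; 1; 2; 2; 2; 2; 3; 3; 3; 3; 3; 3; 3; 3]);
  ([:: 1; 6; 11; 13], [:: 9; 9; 3; 2; 2; 2; 2; 1; 1; 1; 1; 1; 1; 1],
   [:: 0; 1; 2; 2; 2; 2; 3; 3; 3; 3; 3; 3; 3; 3]);
  ([:: 0; 7; 8], [:: 9; 9; 5; 3; 2; 2; 2; 2; 2; 0; 0; 0; 0; 0],
   [:: 0; 1; 2; 3; 2; 2; 3; 3; 3; 0; 0; 0; 0; 0]);
  ([:: 2; 4], [:: 9; 9; 9; 5; 4; 0; 0; 0; 0; 0; 0; 0; 0; 0],
   [:: 0; 1; 2; 3; 3; 0; 0; 0; 0; 0; 0; 0; 0; 0]);
  ([:: 1; 4], [:: 9; 9; 9; 5; 4; 0; 0; 0; 0; 0; 0; 0; 0; 0],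
   [:: 0; 1; 2; 3; 3; 0; 0; 0; 0; 0; 0; 0; 0; 0]);
  ([:: 3; 4; 6], [:: 9; 9; 9; 9; 9; 9; 9; 0; 0; 0; 0; 0; 0; 0],
   [:: 0; 0; 1; 1; 2; 2; 3; 0; 0; 0; 0; 0; 0; 0]);
  ([:: 0; 2], [:: 9; 9; 9; 0; 0; 0; 0; 0; 0; 0; 0; 0; 0; 0],
   [:: 0; 1; 2; 0; 0; 0; 0; 0; 0; 0; 0; 0; 0; 0]);
  ([:: 3; 4; 7], [:: 9; 9; 9; 9; 9; 9; 9; 9; 0; 0; 0; 0; 0; 0],
   [:: 0; 0; 1; 1; 2; 2; 3; 3; 0; 0; 0; 0; 0; 0]);
  ([:: 2; 5; 8; 10; 11], [:: 9; 9; 9; 9; 9; 9; 9; 9; 9; 9; 9; 9; 0; 0],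
   [:: 0; 0; 0; 1; 1; 1; 2; 2; 2; 3; 3; 3; 0; 0]);
  ([:: 3; 4; 5], [:: 9; 9; 9; 9; 9; 9; 0; 0; 0; 0; 0; 0; 0; 0],
   [:: 0; 0; 1; 1; 2; 2; 0; 0; 0; 0; 0; 0; 0; 0]);
  ([:: 2; 5; 8; 10; 13], [:: 9; 9; 9; 9; 9; 9; 9; 9; 9; 9; 9; 3; 3; 3],
   [:: 0; 0; 0; 1; 1; 1; 2; 2; 2; 3; 3; 3; 3; 3]);
  ([:: 0; 5], [:: 9; 9; 5; 5; 4; 4; 0; 0; 0; 0; 0; 0; 0; 0],
   [:: 0; 1; 2; 3; 2; 3; 0; 0; 0; 0; 0; 0; 0; 0]);
  ([:: 2; 5; 9; 10; 13], [:: 9; 9; 9; 9; 9; 9; 9; 9; 9; 9; 9; 3; 3; 3],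
   [:: 0; 0; 0; 1; 1; 1; 2; 2; 2; 3; 3; 3; 3; 3]);
  ([:: 3; 4; 8; 10], [:: 9; 9; 9; 9; 9; 6; 6; 6; 6; 6; 6; 0; 0; 0],
   [:: 0; 0; 1; 2; 3; 1; 1; 2; 2; 3; 3; 0; 0; 0]);
  ([:: 0; 1], [:: 9; 9; 0; 0; 0; 0; 0; 0; 0; 0; 0; 0; 0; 0],
   [:: 0; 1; 0; 0; 0; 0; 0; 0; 0; 0; 0; 0; 0; 0]);
  ([:: 2; 3], [:: 9; 9; 9; 9; 0; 0; 0; 0; 0; 0; 0; 0; 0; 0],
   [:: 0; 1; 2; 3; 0; 0; 0; 0; 0; 0; 0; 0; 0; 0]);
  ([:: 3; 4; 9; 10], [:: 9; 9; 9; 9; 9; 6; 6; 6; 6; 6; 6; 0; 0; 0],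
   [:: 0; 0; 1; 2; 3; 1; 1; 2; 2; 3; 3; 0; 0; 0]);
  ([:: 0; 7; 13], [:: 9; 3; 3; 3; 3; 3; 3; 3; 1; 1; 1; 1; 1; 1],
   [:: 0; 1; 1; 1; 2; 2; 2; 3; 3; 3; 3; 3; 3; 3]);
  ([:: 0; 4], [:: 9; 9; 9; 5; 4; 0; 0; 0; 0; 0; 0; 0; 0; 0],
   [:: 0; 1; 2; 3; 3; 0; 0; 0; 0; 0; 0; 0; 0; 0]);
  ([:: 3; 4; 8; 9], [:: 9; 9; 9; 9; 9; 9; 6; 6; 6; 6; 0; 0; 0; 0],
   [:: 0; 0; 1; 1; 2; 3; 2; 2; 3; 3; 0; 0; 0; 0]);
  ([:: 2; 5; 9; 10; 12], [:: 9; 9; 9; 9; 9; 9; 9; 9; 9; 9; 9; 6; 4; 0],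
   [:: 0; 0; 0; 1; 1; 1; 2; 2; 2; 3; 3; 3; 3; 0]);
  ([:: 1; 6; 11; 12], [:: 9; 9; 4; 2; 2; 2; 2; 1; 1; 1; 1; 1; 1; 0],
   [:: 0; 1; 2; 2; 2; 3; 3; 2; 3; 3; 3; 3; 3; 0]);
  ([:: 0; 6], [:: 9; 5; 5; 5; 4; 4; 4; 0; 0; 0; 0; 0; 0; 0],
   [:: 0; 1; 2; 3; 1; 2; 3; 0; 0; 0; 0; 0; 0; 0])].

Lemma r_certificates4_valid :
  all (fun x => r_certificate 4 11 13 9 x.1 x.2) r_certificates4.
Proof. by vm_compute. Qed.

Lemma r_certificates4_cover : covered_ext 4 (map fst r_certificates4) 11 [::].
Proof. by vm_compute. Qed.

Lemma rho_certificates4_valid :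
  all (fun x => rho_certificate 4 14 10 7 x.1.1 x.1.2 x.2) rho_certificates4.
Proof. by vm_compute. Qed.

Lemma rho_certificates4_cover :
  covered_ext 4 [seq x.1.1 | x <- rho_certificates4] 14 [::].
Proof. by vm_compute. Qed.

Section FourAgents.
Variable R : realType.
Local Open Scope ring_scope.

Lemma r_nm4_le m : r_nm R 4 m <= 13 / 9.
Proof.
apply: le_trans (r_order4_le R m); apply: ge_inf; last by exists (order4 m).
by exists 0 => _ [S ->]; apply: r_order_ge0.
Qed.

Lemma rhat_nm4_le m : rhat_nm R 4 m <= 13 / 9.
Proof.
apply: le_trans (r_order4_le R m); apply: ge_inf; last first.
  by exists (order4 m); split => //; apply: ridge_order4.
by exists 0 => _ [S [_ ->]]; apply: r_order_ge0.
Qed.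

Lemma rho_nm4_le m : rho_nm R 4 m <= 4.
Proof.
apply: le_trans (rho_order_le R (order4 m) isT); apply: ge_inf; last by exists (order4 m).
by exists 0 => _ [S ->]; apply: rho_order_ge0.
Qed.

Lemma r_order4_11_ge (S : picking_order 4 11) : 13 / 9 <= r_order R S.
Proof.
by apply: (r_order_ge_certified R S _ _ r_certificates4_valid r_certificates4_cover).
Qed.

Lemma r_nm4_11 : r_nm R 4 11 = 13 / 9.
Proof.
apply/eqP; rewrite eq_le r_nm4_le; apply: lb_le_inf.
  by exists (r_order R (order4 11)), (order4 11).
by move=> _ [S ->]; apply: r_order4_11_ge.
Qed.

Lemma rhat_nm4_11 : rhat_nm R 4 11 = 13 / 9.
Proof.
apply/eqP; rewrite eq_le rhat_nm4_le; apply: lb_le_inf.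
  by exists (r_order R (order4 11)), (order4 11); split => //; apply: ridge_order4.
by move=> _ [S [_ ->]]; apply: r_order4_11_ge.
Qed.

Lemma rho_nm4_14 : 10 / 7 <= rho_nm R 4 14.
Proof.
apply: lb_le_inf; first by exists (rho_order R (order4 14)), (order4 14).
move=> _ [S ->].
by apply: (rho_order_ge_certified R S _ _ rho_certificates4_valid
  rho_certificates4_cover).
Qed.

End FourAgents.

Local Open Scope ring_scope.

Theorem proposition3 (R : realType) :
  [/\ rhat_n R 4 = 13 / 9, r_n R 4 = 13 / 9 & 10 / 7 <= rho_n R 4].
Proof.
split.
- apply: sup_max => [|_ [m [_ ->]]]; last exact: rhat_nm4_le.
  by exists 11%N; rewrite rhat_nm4_11.
- apply: sup_max => [|_ [m ->]]; last exact: r_nm4_le.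
  by exists 11%N; rewrite r_nm4_11.
- apply: le_trans (rho_nm4_14 R) (ub_le_sup _ _); last by exists 14%N.
  by exists 4 => _ [m ->]; apply: rho_nm4_le.
Qed.
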